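(* Fix $\alpha\in(0,1/2)$ and $q_1,q_3\in(0,1)$. Define $m^*(3/4,3/4)=16\alpha$, $m^*(3/4,1/4)=m^*(1/4,3/4)=\frac{8(1-2\alpha)}{3}$, $m^*(1/4,1/4)=\frac{16\alpha}{9}$, $m^*=\frac{16(4\alpha+3)}{9}$, $\overline{\lambda}^*=1/m^*$, $$\overline{\lambda}=\frac{1}{m^*}\Big(m^*(\tfrac34,\tfrac34)\tfrac{1-q_3}{4}+m^*(\tfrac34,\tfrac14)\tfrac{3(1-q_3)}{4}+m^*(\tfrac14,\tfrac34)\tfrac{1-q_1}{4}+m^*(\tfrac14,\tfrac14)\tfrac{3(1-q_1)}{4}\Big),$$ and the treatment's steady-state total population $M=\frac{2(4\alpha+1)}{3(1-q_3)}+\frac{2(3-4\alpha)}{3(1-q_1)}$. If $6q_3+2q_1>5$ and $\frac{4\alpha+1}{1-q_3}+\frac{3-4\alpha}{1-q_1}<\frac{8(4\alpha+3)}{3}$, then $\overline{\lambda}<\overline{\lambda}^*$ but $M<m^*$.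
   Context: Model: user types $(x,e)\in\{1/4,3/4\}^2$ with per-period inflow masses $\alpha$ for $(3/4,3/4)$ and $(1/4,1/4)$ and $1/2-\alpha$ for $(3/4,1/4)$ and $(1/4,3/4)$; an algorithm gives quality $q(x)\in(0,1)$ to segment $x$ and a type-$(x,e)$ user churns each period with probability $(1-q(x))(1-e)$; the steady-state mass of type $(x,e)$ is $F(x,e)/((1-q(x))(1-e))$. $m^*(x,e)$ and $m^*$ are the status quo ($q^*(x)=x$) steady-state masses and total, $\overline{\lambda}^*$ its churn rate, $\overline{\lambda}$ the churn rate observed in a one-period experiment of the treatment ($q(1/4)=q_1$, $q(3/4)=q_3$) on the status quo population, and $M$ the treatment's own steady-state total population. *)

From Stdlib Require Import Reals.
Open Scope R_scope.

Definition m33 (alpha : R) : R := 16 * alpha.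
Definition m31 (alpha : R) : R := 8 * (1 - 2 * alpha) / 3.
Definition m13 (alpha : R) : R := 8 * (1 - 2 * alpha) / 3.
Definition m11 (alpha : R) : R := 16 * alpha / 9.
Definition mstar (alpha : R) : R := 16 * (4 * alpha + 3) / 9.

Definition lambda_star (alpha : R) : R := 1 / mstar alpha.

Definition lambda_bar (alpha q1 q3 : R) : R :=
  (1 / mstar alpha) *
  (m33 alpha * ((1 - q3) / 4) + m31 alpha * (3 * (1 - q3) / 4)
   + m13 alpha * ((1 - q1) / 4) + m11 alpha * (3 * (1 - q1) / 4)).

Definition M_treat (alpha q1 q3 : R) : R :=
  2 * (4 * alpha + 1) / (3 * (1 - q3)) + 2 * (3 - 4 * alpha) / (3 * (1 - q1)).

From Stdlib Require Import Reals Lra.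
Open Scope R_scope.

(* The segment mix alpha cancels from the experiment's churn, which is the
   status-quo churn scaled by 2(1 - q3) + 2/3 (1 - q1); this factor is below 1
   exactly when 6 q3 + 2 q1 > 5.  The treatment's own population is 2/3 of the
   left-hand side of the last hypothesis, hence below m*. *)

Lemma mstar_gt0 (alpha : R) : -3/4 < alpha -> 0 < mstar alpha.
Proof. unfold mstar; lra. Qed.

Lemma lambda_barE (alpha q1 q3 : R) :
  lambda_bar alpha q1 q3 = (2 * (1 - q3) + 2 / 3 * (1 - q1)) * lambda_star alpha.
Proof.
  unfold lambda_bar, lambda_star, m33, m31, m13, m11.
  generalize (1 / mstar alpha); intro s; field.
Qed.

Lemma lambda_bar_lt_lambda_star (alpha q1 q3 : R) :
  0 < mstar alpha -> 5 < 6 * q3 + 2 * q1 ->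
  lambda_bar alpha q1 q3 < lambda_star alpha.
Proof.
  intros Hm Hq.
  assert (Hl : 0 < lambda_star alpha) by (apply Rdiv_lt_0_compat; lra).
  rewrite lambda_barE; nra.
Qed.

Lemma M_treatE (alpha q1 q3 : R) : q1 <> 1 -> q3 <> 1 ->
  M_treat alpha q1 q3
  = 2 / 3 * ((4 * alpha + 1) / (1 - q3) + (3 - 4 * alpha) / (1 - q1)).
Proof. intros H1 H3; unfold M_treat; field; lra. Qed.

Lemma M_treat_lt_mstar (alpha q1 q3 : R) : q1 <> 1 -> q3 <> 1 ->
  (4 * alpha + 1) / (1 - q3) + (3 - 4 * alpha) / (1 - q1) < 8 * (4 * alpha + 3) / 3 ->
  M_treat alpha q1 q3 < mstar alpha.
Proof. intros H1 H3 HS; rewrite M_treatE by assumption; unfold mstar; lra. Qed.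

Theorem lemma3 (alpha q1 q3 : R) :
  0 < alpha < 1 / 2 -> 0 < q1 < 1 -> 0 < q3 < 1 ->
  6 * q3 + 2 * q1 > 5 ->
  (4 * alpha + 1) / (1 - q3) + (3 - 4 * alpha) / (1 - q1) < 8 * (4 * alpha + 3) / 3 ->
  lambda_bar alpha q1 q3 < lambda_star alpha /\ M_treat alpha q1 q3 < mstar alpha.
Proof.
  intros Ha H1 H3 Hq HS; split.
  - apply lambda_bar_lt_lambda_star; [apply mstar_gt0; lra | lra].
  - apply M_treat_lt_mstar; lra.
Qed.
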